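(* For every $i\in\{1,\dots,n\}$, the collision-avoidance command $\mathbf p\mapsto v_i^{\mathrm{cv}}(\mathbf p)$ is locally Lipschitz on $\mathbb{R}^{dn}$.
   Context: $n\ge2$ robots with positions $p_i\in\mathbb{R}^d$, $\mathbf p=[p_1^\top,\dots,p_n^\top]^\top\in\mathbb{R}^{dn}$; sample points $q_1,\dots,q_m\in\mathbb{R}^d$; constants $\beta>0$, $\sigma_1>0$, $\sigma_2>0$, $\varepsilon\in(0,1)$, $r_{\mathrm{avoid}}>0$. Mass: $P_k(\mathbf p)=\frac1n\sum_{i=1}^n e^{-\beta\|q_k-p_i\|^2}$. Meanshift command: $v_i^{\mathrm{ms}}(\mathbf p)=\dfrac{\frac{\sigma_1}{m}\sum_{k=1}^m P_k(\mathbf p)^{-1}e^{-\beta\|q_k-p_i\|^2}(q_k-p_i)}{\sum_{k=1}^m P_k(\mathbf p)^{-1}e^{-\beta\|q_k-p_i\|^2}}$. Repulsive term: $\tilde v_i^{\mathrm{cv}}=\sigma_2\sum_{j\ne i,\ \|p_i-p_j\|\le r_{\mathrm{avoid}}}\frac{r_{\mathrm{avoid}}-\|p_i-p_j\|}{\|p_i-p_j\|+\varepsilon}(p_i-p_j)$. With $\varphi=\min\{\|v_i^{\mathrm{ms}}\|^2/\varepsilon,1\}$, the gain is $\kappa_2=\varphi$ if $(v_i^{\mathrm{ms}})^\top\tilde v_i^{\mathrm{cv}}\ge0$ and $\kappa_2=\varphi\min\{-(1-\varepsilon)\|v_i^{\mathrm{ms}}\|^2/((v_i^{\mathrm{ms}})^\top\tilde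 v_i^{\mathrm{cv}}),1\}$ if $(v_i^{\mathrm{ms}})^\top\tilde v_i^{\mathrm{cv}}<0$; collision-avoidance command $v_i^{\mathrm{cv}}=\kappa_2\tilde v_i^{\mathrm{cv}}$. *)

From HB Require Import structures.
From mathcomp Require Import all_boot all_order all_algebra.
From mathcomp Require Import reals.
From mathcomp Require Import sequences exp.
Set Implicit Arguments. Unset Strict Implicit. Unset Printing Implicit Defensive.
Import Order.TTheory GRing.Theory Num.Theory.
Local Open Scope ring_scope.

Section Defs.
Variable R : realType.

Definition vdot (d : nat) (u v : 'rV[R]_d) : R := \sum_(j < d) u 0 j * v 0 j.
Definition vnorm (d : nat) (u : 'rV[R]_d) : R := Num.sqrt (vdot u u).

(* A configuration p = [p_1^T,...,p_n^T]^T in R^{dn} is stored as the n x d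
   matrix whose i-th row is p_i; its Euclidean norm in R^{dn} is the
   Frobenius norm. *)
Definition pos (n d : nat) (p : 'M[R]_(n, d)) (i : 'I_n) : 'rV[R]_d := row i p.
Definition cnorm (n d : nat) (p : 'M[R]_(n, d)) : R :=
  Num.sqrt (\sum_(i < n) \sum_(j < d) p i j ^+ 2).

Definition mass (n d m : nat) (beta : R) (q : 'I_m -> 'rV[R]_d)
  (p : 'M[R]_(n, d)) (k : 'I_m) : R :=
  n%:R^-1 * \sum_(i < n) expR (- beta * vnorm (q k - pos p i) ^+ 2).

Definition v_ms (n d m : nat) (beta sigma1 : R) (q : 'I_m -> 'rV[R]_d)
  (p : 'M[R]_(n, d)) (i : 'I_n) : 'rV[R]_d :=
  (\sum_(k < m) ((mass beta q p k)^-1 * expR (- beta * vnorm (q k - pos p i) ^+ 2)))^-1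
  *: ((sigma1 / m%:R) *:
      \sum_(k < m) (((mass beta q p k)^-1 * expR (- beta * vnorm (q k - pos p i) ^+ 2))
                    *: (q k - pos p i))).

Definition v_rep (n d : nat) (sigma2 eps ravoid : R)
  (p : 'M[R]_(n, d)) (i : 'I_n) : 'rV[R]_d :=
  sigma2 *: \sum_(j < n | (j != i) && (vnorm (pos p i - pos p j) <= ravoid))
     (((ravoid - vnorm (pos p i - pos p j)) / (vnorm (pos p i - pos p j) + eps))
        *: (pos p i - pos p j)).

Definition kappa2 (d : nat) (eps : R) (v vt : 'rV[R]_d) : R :=
  let phi := Num.min (vnorm v ^+ 2 / eps) 1 in
  if 0 <= vdot v vt then phi
  else phi * Num.min (- (1 - eps) * vnorm v ^+ 2 / vdot v vt) 1.

Definition v_cv (n d m : nat) (beta sigma1 sigma2 eps ravoid : R)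
  (q : 'I_m -> 'rV[R]_d) (p : 'M[R]_(n, d)) (i : 'I_n) : 'rV[R]_d :=
  kappa2 eps (v_ms beta sigma1 q p i) (v_rep sigma2 eps ravoid p i)
  *: v_rep sigma2 eps ravoid p i.

Definition locally_lipschitz (n d : nat) (f : 'M[R]_(n, d) -> 'rV[R]_d) : Prop :=
  forall p0 : 'M[R]_(n, d), exists r : R, 0 < r /\ exists L : R,
    forall p p' : 'M[R]_(n, d), cnorm (p - p0) < r -> cnorm (p' - p0) < r ->
      vnorm (f p - f p') <= L * cnorm (p - p').

End Defs.

From HB Require Import structures.
From mathcomp Require Import all_boot all_order all_algebra.
From mathcomp Require Import reals.
From mathcomp Require Import sequences exp.
From mathcomp Require Import ring lra.
Import Order.TTheory GRing.Theory Num.Theory.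
Set Implicit Arguments. Unset Strict Implicit. Unset Printing Implicit Defensive.
Local Open Scope ring_scope.

(* The command is built from the positions by sums, products, expR, Euclidean
   norms, max/min with constants and inverses of positive functions; each of these
   preserves local Lipschitz continuity (inverses because a positive locally
   Lipschitz function stays bounded away from 0 near each point). The two
   non-smooth ingredients become Lipschitz after a rewriting: the truncated
   repulsion gain is (r - t)/(t + eps) evaluated at min(t, r), where it vanishes
   for t >= r; and with a = |v|^2, s = v.vt the gain kappa2 equals
   G((1 - eps) a, -s) / ((1 - eps) max(a, eps)) with G(x, y) = x^2 / max(x, y),
   which is 2-Lipschitz on x >= 0. *)

Section Scalar.
Variable R : realFieldType.

Lemma sum_sqr_le_sqr_sum_abs (I : Type) (s : seq I) (x : I -> R) :
  \sum_(j <- s) x j ^+ 2 <= (\sum_(j <- s) `|x j|) ^+ 2.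
Proof.
elim: s => [|a s IH]; first by rewrite !big_nil expr0n.
have hs : 0 <= \sum_(j <- s) `|x j| by apply: sumr_ge0.
have ha := normr_ge0 (x a).
rewrite !big_cons -[x a ^+ 2]real_normK ?num_real //; nra.
Qed.

Lemma lipschitz_maxr (c x y : R) : `|Num.max x c - Num.max y c| <= `|x - y|.
Proof.
have := ler_norm (x - y); have := ler_norm (y - x); rewrite distrC.
by case: (leP x c) => ?; case: (leP y c) => ?; rewrite ler_norml; lra.
Qed.

Lemma lipschitz_minr (c x y : R) : `|Num.min x c - Num.min y c| <= `|x - y|.
Proof.
have := ler_norm (x - y); have := ler_norm (y - x); rewrite distrC.
by case: (leP x c) => ?; case: (leP y c) => ?; rewrite ler_norml; lra.
Qed.

Lemma lipschitz_invr (c x y : R) : 0 < c -> c <= x -> c <= y ->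
  `|x^-1 - y^-1| <= c ^- 2 * `|x - y|.
Proof.
move=> c0 cx cy; have x0 : 0 < x := lt_le_trans c0 cx.
have y0 : 0 < y := lt_le_trans c0 cy.
have -> : x^-1 - y^-1 = (y - x) / (x * y) by field; rewrite !gt_eqF.
have xy0 : 0 < x * y by rewrite mulr_gt0.
rewrite normrM distrC mulrC ger0_norm ?invr_ge0 ?(ltW xy0) //.
rewrite ler_wpM2r // lef_pV2 ?posrE ?exprn_gt0 // expr2.
exact: ler_pM (ltW c0) (ltW c0) cx cy.
Qed.

Definition rep_gain (ra e x : R) : R := (ra - x) / (x + e).

Lemma lipschitz_rep_gain (ra e x y : R) : 0 < e -> 0 <= x -> 0 <= y ->
  `|rep_gain ra e x - rep_gain ra e y| <= `|ra + e| * e ^- 2 * `|x - y|.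
Proof.
move=> e0 x0 y0; have xe : e <= x + e by rewrite lerDr.
have ye : e <= y + e by rewrite lerDr.
have -> : rep_gain ra e x - rep_gain ra e y = (ra + e) * ((x + e)^-1 - (y + e)^-1).
  by rewrite /rep_gain; field; rewrite !gt_eqF ?(lt_le_trans e0).
rewrite normrM -mulrA ler_wpM2l //.
by apply: le_trans (lipschitz_invr e0 xe ye) _; rewrite opprD addrACA subrr addr0.
Qed.

Definition sqr_over_max (x y : R) : R := x ^+ 2 / Num.max x y.

Lemma sqr_over_maxE (x y : R) : 0 <= x ->
  sqr_over_max x y = if y <= x then x else x ^+ 2 / y.
Proof.
move=> x0; rewrite /sqr_over_max; case: (leP y x) => // yx.
have [->|xn0] := eqVneq x 0; first by rewrite expr0n /= mul0r.
by rewrite expr2 mulfK.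
Qed.

Lemma lipschitz_sqr_over_max_r (x y y' : R) : 0 <= x ->
  `|sqr_over_max x y - sqr_over_max x y'| <= `|y - y'|.
Proof.
move=> x0; wlog yy' : y y' / y <= y'.
  move=> W; case: (leP y y') => [|/ltW] h; first exact: W.
  by rewrite distrC (distrC y); apply: W.
rewrite (ler0_norm (x := y - y')) ?subr_le0 // opprB !sqr_over_maxE //.
have yy'0 : 0 <= y' - y by rewrite subr_ge0.
case: (lerP y x) => yx; case: (lerP y' x) => y'x.
- by rewrite subrr normr0.
- have y'0 : 0 < y' := le_lt_trans x0 y'x.
  have -> : x - x ^+ 2 / y' = x / y' * (y' - x) by field; rewrite gt_eqF.
  have xy'1 : x / y' <= 1 by rewrite ler_pdivrMr // mul1r ltW.
  have y'x0 : 0 <= y' - x by rewrite subr_ge0 ltW.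
  rewrite ger0_norm; last by rewrite mulr_ge0 // divr_ge0 // ltW.
  by apply: le_trans (ler_piMl y'x0 xy'1) _; rewrite lerB.
- lra.
- have y0 : 0 < y := le_lt_trans x0 yx.
  have y'0 : 0 < y' := lt_le_trans y0 yy'.
  have -> : x ^+ 2 / y - x ^+ 2 / y' = x ^+ 2 / (y * y') * (y' - y).
    by field; rewrite !gt_eqF.
  have yy'pos : 0 < y * y' by rewrite mulr_gt0.
  have k1 : x ^+ 2 / (y * y') <= 1.
    by rewrite ler_pdivrMr // mul1r expr2 ler_pM // ltW.
  rewrite ger0_norm; last by rewrite mulr_ge0 // divr_ge0 ?sqr_ge0 // ltW.
  exact: ler_piMl yy'0 k1.
Qed.

Lemma lipschitz_sqr_over_max_l (x x' y : R) : 0 <= x -> 0 <= x' ->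
  `|sqr_over_max x y - sqr_over_max x' y| <= 2 * `|x - x'|.
Proof.
wlog xx' : x x' / x <= x'.
  move=> W; case: (leP x x') => [|/ltW] h; first exact: W.
  by move=> x0 x'0; rewrite distrC (distrC x); apply: W.
move=> x0 x'0; rewrite (ler0_norm (x := x - x')) ?subr_le0 // opprB.
rewrite !sqr_over_maxE //.
case: (lerP y x) => yx; last first.
  have y0 : 0 < y := le_lt_trans x0 yx.
  have [b0 yb] : 0 < y^-1 /\ y * y^-1 = 1 by rewrite invr_gt0 mulfV ?gt_eqF.
  by case: (lerP y x') => yx'; rewrite distrC ger0_norm; nra.
case: (lerP y x') => yx'; last lra.
by rewrite ler0_norm ?subr_le0 // opprB ler_peMl ?subr_ge0 ?ler1n.
Qed.

Lemma lipschitz_sqr_over_max (x y x' y' : R) : 0 <= x -> 0 <= x' ->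
  `|sqr_over_max x y - sqr_over_max x' y'| <= 2 * (`|x - x'| + `|y - y'|).
Proof.
move=> x0 x'0; have := lipschitz_sqr_over_max_l y x0 x'0.
have := lipschitz_sqr_over_max_r y y' x'0.
have := ler_normD (sqr_over_max x y - sqr_over_max x' y) (sqr_over_max x' y - sqr_over_max x' y').
rewrite addrA subrK; have := normr_ge0 (y - y'); lra.
Qed.

Lemma minr_div_max (a e : R) : 0 <= a -> 0 < e ->
  Num.min (a / e) 1 = a / Num.max a e.
Proof.
move=> a0 e0; case: (leP a e) => ae.
  by apply/min_idPl; rewrite ler_pdivrMr // mul1r.
rewrite divff ?gt_eqF ?(lt_trans e0 ae) //; apply/min_idPr.
by rewrite ler_pdivlMr // mul1r ltW.
Qed.

End Scalar.

Lemma lipschitz_expR (R : realType) (B x y : R) : `|x| <= B -> `|y| <= B ->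
  `|expR x - expR y| <= expR B * `|x - y|.
Proof.
wlog xy : x y / x <= y.
  move=> W; case: (leP x y) => [|/ltW] h; first exact: W.
  by move=> hx hy; rewrite distrC (distrC x); apply: W.
move=> /ler_normlW hx /ler_normlW hy.
have eyB : expR y <= expR B by rewrite ler_expR.
have := expR_ge1Dx (x - y); rewrite -(ler_pM2l (expR_gt0 y)) -expRD [y + _]addrC subrK.
rewrite distrC (distrC x) !ger0_norm ?subr_ge0 ?ler_expR // => h.
have := expR_gt0 x; nra.
Qed.

Section Euclidean.
Variables (R : realType) (d : nat).
Implicit Types u w : 'rV[R]_d.

Lemma vdot_ge0 u : 0 <= vdot u u.
Proof. by apply: sumr_ge0 => j _; rewrite -expr2 sqr_ge0. Qed.

Lemma vnorm_ge0 u : 0 <= vnorm u.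
Proof. exact: sqrtr_ge0. Qed.

Lemma vnorm_sq u : vnorm u ^+ 2 = vdot u u.
Proof. by rewrite /vnorm sqr_sqrtr // vdot_ge0. Qed.

Lemma vdotDD u w : vdot (u + w) (u + w) = vdot u u + 2 * vdot u w + vdot w w.
Proof.
by rewrite /vdot mulr_sumr -!big_split /=; apply: eq_bigr => j _; rewrite !mxE; ring.
Qed.

Lemma vdot0_eq0 u : vdot u u = 0 -> forall w, vdot u w = 0.
Proof.
move/eqP; rewrite psumr_eq0 => [/allP u0 w|j _]; last by rewrite -expr2 sqr_ge0.
rewrite /vdot big1 // => j _.
by move: (u0 j (mem_index_enum _)); rewrite /= mulf_eq0 orbb => /eqP->; rewrite mul0r.
Qed.

(* Expand 0 <= |A w - C u|^2 with A = |u|^2 and C = u.w, then divide by A. *)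
Lemma cauchy_schwarz u w : vdot u w ^+ 2 <= vdot u u * vdot w w.
Proof.
have expand a c : \sum_(j < d) (a * w 0 j - c * u 0 j) ^+ 2
    = a ^+ 2 * vdot w w - 2 * a * c * vdot u w + c ^+ 2 * vdot u u.
  rewrite /vdot !mulr_sumr -sumrB -big_split /=.
  by apply: eq_bigr => j _; ring.
have [A0|Apos] := eqVneq (vdot u u) 0.
  by rewrite vdot0_eq0 // A0 expr0n mul0r.
have {}Apos : 0 < vdot u u by rewrite lt_def Apos vdot_ge0.
have : 0 <= \sum_(j < d) (vdot u u * w 0 j - vdot u w * u 0 j) ^+ 2.
  by apply: sumr_ge0 => j _; apply: sqr_ge0.
rewrite expand => h.
have : 0 <= vdot u u * (vdot u u * vdot w w - vdot u w ^+ 2) by move: h; congr (_ <= _); ring.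
by rewrite pmulr_rge0 // subr_ge0.
Qed.

Lemma vnormD u w : vnorm (u + w) <= vnorm u + vnorm w.
Proof.
have h0 : 0 <= vnorm u + vnorm w by rewrite addr_ge0 ?vnorm_ge0.
rewrite -(ger0_norm h0) -sqrtr_sqr /vnorm ler_wsqrtr // vdotDD.
have hC : vdot u w <= Num.sqrt (vdot u u) * Num.sqrt (vdot w w).
  rewrite -sqrtrM ?vdot_ge0 //.
  by apply: le_trans (ler_norm _) _; rewrite -sqrtr_sqr ler_wsqrtr // cauchy_schwarz.
rewrite sqrrD !sqr_sqrtr ?vdot_ge0 //; lra.
Qed.

Lemma vnormN u : vnorm (- u) = vnorm u.
Proof. by rewrite /vnorm /vdot; congr Num.sqrt; apply: eq_bigr => j _; rewrite mxE mulrNN. Qed.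

Lemma ler_dist_vnorm u w : `|vnorm u - vnorm w| <= vnorm (u - w).
Proof.
have := vnormD (u - w) w; have := vnormD (w - u) u.
rewrite !subrK -opprB vnormN ler_norml; lra.
Qed.

Lemma vnorm_le_sum_abs u : vnorm u <= \sum_(j < d) `|u 0 j|.
Proof.
have h0 : 0 <= \sum_(j < d) `|u 0 j| by apply: sumr_ge0.
rewrite -(ger0_norm h0) -sqrtr_sqr ler_wsqrtr //.
by apply: le_trans (sum_sqr_le_sqr_sum_abs _ _); apply: lexx.
Qed.

Lemma kappa2E (eps : R) (v vt : 'rV[R]_d) : 0 < eps -> eps < 1 ->
  kappa2 eps v vt = sqr_over_max ((1 - eps) * vdot v v) (- vdot v vt)
                    / ((1 - eps) * Num.max (vdot v v) eps).
Proof.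
move=> e0 e1; rewrite /kappa2 vnorm_sq minr_div_max ?vdot_ge0 //.
have a0 := vdot_ge0 v; set a := vdot v v in a0 *; set s := vdot v vt.
have c0 : 0 < 1 - eps by rewrite subr_gt0.
have ca0 : 0 <= (1 - eps) * a by rewrite mulr_ge0 // ltW.
have m0 : Num.max a eps != 0 by rewrite gt_eqF // lt_max e0 orbT.
case: (leP 0 s) => s0.
  rewrite sqr_over_maxE // ifT; last by rewrite (le_trans _ ca0) // oppr_le0.
  by field; rewrite m0 gt_eqF.
have -> : - (1 - eps) * a / s = (1 - eps) * a / - s by rewrite invrN mulrN !mulNr.
rewrite minr_div_max ?oppr_gt0 // /sqr_over_max.
have : Num.max ((1 - eps) * a) (- s) != 0 by rewrite gt_eqF // lt_max oppr_gt0 s0 orbT.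
by move=> m1; field; rewrite m0 m1 gt_eqF.
Qed.

End Euclidean.

Section LocallyLipschitz.
Variables (R : realType) (n d : nat).
Local Notation M := 'M[R]_(n, d).
Implicit Types (f g : M -> R) (p : M).

Definition loclip f := forall p0 : M, exists2 r : R, 0 < r & exists2 L : R, 0 <= L &
  forall p p', cnorm (p - p0) < r -> cnorm (p' - p0) < r ->
    `|f p - f p'| <= L * cnorm (p - p').

Lemma cnorm_ge0 p : 0 <= cnorm p.
Proof. exact: sqrtr_ge0. Qed.

Lemma cnorm0 : cnorm (0 : M) = 0.
Proof.
by rewrite /cnorm big1 ?sqrtr0 // => i _; rewrite big1 // => j _; rewrite mxE expr0n.
Qed.

Lemma ler_entry_cnorm p i j : `|p i j| <= cnorm p.
Proof.
rewrite -sqrtr_sqr /cnorm ler_wsqrtr // (bigD1 i) //= (bigD1 j) //=.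
have sq0 (k : 'I_n) (l : 'I_d) : 0 <= p k l ^+ 2 by apply: sqr_ge0.
by rewrite -addrA lerDl addr_ge0 // !sumr_ge0 // => k _; rewrite sumr_ge0.
Qed.

Lemma loclip_eq f g : f =1 g -> loclip f -> loclip g.
Proof.
move=> fg hf p0; have [r r0 [L L0 H]] := hf p0.
by exists r => //; exists L => // p p' hp hp'; rewrite -!fg; apply: H.
Qed.

Lemma lipschitz_ball_bounded f (p0 : M) (r L : R) : 0 <= L ->
  (forall p p', cnorm (p - p0) < r -> cnorm (p' - p0) < r ->
     `|f p - f p'| <= L * cnorm (p - p')) ->
  forall p, cnorm (p - p0) < r -> `|f p| <= `|f p0| + L * r.
Proof.
move=> L0 H p hp; have hp0 : cnorm (p0 - p0) < r.
  by rewrite subrr cnorm0; apply: le_lt_trans hp; apply: cnorm_ge0.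
have := H p p0 hp hp0; have := ler_normD (f p - f p0) (f p0); rewrite subrK.
have : L * cnorm (p - p0) <= L * r by rewrite ler_wpM2l // ltW.
lra.
Qed.

Lemma loclip_comp2 (D : R -> Prop) (h : R -> R -> R) f g :
  (forall B, 0 <= B -> exists2 K, 0 <= K & forall x y x' y', D x -> D x' ->
     `|x| <= B -> `|y| <= B -> `|x'| <= B -> `|y'| <= B ->
     `|h x y - h x' y'| <= K * (`|x - x'| + `|y - y'|)) ->
  (forall p, D (f p)) -> loclip f -> loclip g -> loclip (fun p => h (f p) (g p)).
Proof.
move=> hh hD hf hg p0.
have [r1 r10 [L1 L10 H1]] := hf p0; have [r2 r20 [L2 L20 H2]] := hg p0.
set B := `|f p0| + L1 * r1 + (`|g p0| + L2 * r2).
have B1 : `|f p0| + L1 * r1 <= B by rewrite lerDl addr_ge0 ?mulr_ge0 // ltW.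
have B2 : `|g p0| + L2 * r2 <= B by rewrite lerDr addr_ge0 ?mulr_ge0 // ltW.
have [K K0 HK] := hh B (le_trans (addr_ge0 (normr_ge0 _) (mulr_ge0 L10 (ltW r10))) B1).
exists (Num.min r1 r2); first by rewrite lt_min r10 r20.
exists (K * (L1 + L2)); first by rewrite mulr_ge0 ?addr_ge0.
move=> p p'; rewrite !lt_min => /andP[hp1 hp2] /andP[hp1' hp2'].
have bf := lipschitz_ball_bounded L10 H1; have bg := lipschitz_ball_bounded L20 H2.
apply: le_trans (HK _ _ _ _ (hD p) (hD p') _ _ _ _) _;
  try by [apply: le_trans B1; apply: bf | apply: le_trans B2; apply: bg].
rewrite -mulrA ler_wpM2l // mulrDl.
by apply: lerD; [apply: H1 | apply: H2].
Qed.

Lemma loclip_comp (D : R -> Prop) (h : R -> R) f :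
  (forall B, 0 <= B -> exists2 K, 0 <= K & forall x x', D x -> D x' ->
     `|x| <= B -> `|x'| <= B -> `|h x - h x'| <= K * `|x - x'|) ->
  (forall p, D (f p)) -> loclip f -> loclip (fun p => h (f p)).
Proof.
move=> hh hD hf; apply: (@loclip_comp2 D (fun x _ => h x) f f) => // B B0.
have [K K0 HK] := hh B B0; exists K => // x y x' y' Dx Dx' hx _ hx' _.
by apply: le_trans (HK _ _ Dx Dx' hx hx') _; rewrite ler_wpM2l // lerDl.
Qed.

Lemma loclip_cst (c : R) : loclip (fun _ => c).
Proof.
by move=> p0; exists 1 => //; exists 0 => // p p' _ _; rewrite subrr normr0 mul0r.
Qed.

Lemma loclip_entry i j : loclip (fun p => p i j).
Proof.
move=> p0; exists 1 => //; exists 1 => // p p' _ _.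
by rewrite mul1r; have := ler_entry_cnorm (p - p') i j; rewrite !mxE.
Qed.

Lemma loclipD f g : loclip f -> loclip g -> loclip (fun p => f p + g p).
Proof.
apply: (@loclip_comp2 (fun _ => True)) => // B _.
exists 1 => // x y x' y' _ _ _ _ _ _.
by rewrite mul1r opprD addrACA; apply: ler_normD.
Qed.

Lemma loclipN f : loclip f -> loclip (fun p => - f p).
Proof.
apply: (@loclip_comp (fun _ => True)) => // B _.
by exists 1 => // x x' _ _ _ _; rewrite mul1r -opprD normrN.
Qed.

Lemma loclipM f g : loclip f -> loclip g -> loclip (fun p => f p * g p).
Proof.
apply: (@loclip_comp2 (fun _ => True)) => // B B0.
exists B => // x y x' y' _ _ hx hy hx' hy'.
rewrite (_ : x * y - x' * y' = x * (y - y') + y' * (x - x')); last by ring.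
apply: le_trans (ler_normD _ _) _; rewrite !normrM mulrDr addrC.
by apply: lerD; apply: ler_wpM2r.
Qed.

Lemma loclipX f k : loclip f -> loclip (fun p => f p ^+ k).
Proof.
move=> hf; elim: k => [|k IH]; first exact: loclip_cst.
exact: loclip_eq (fun p => esym (exprS _ _)) (loclipM hf IH).
Qed.

Lemma loclip_sum (I : Type) (s : seq I) (P : pred I) (F : I -> M -> R) :
  (forall k, loclip (F k)) -> loclip (fun p => \sum_(k <- s | P k) F k p).
Proof.
move=> hF; elim: s => [|a s IH].
  by apply: loclip_eq (loclip_cst 0) => p; rewrite big_nil.
case Pa: (P a).
  by apply: loclip_eq (loclipD (hF a) IH) => p; rewrite big_cons Pa.
by apply: loclip_eq IH => p; rewrite big_cons Pa.
Qed.

Lemma loclipV f : loclip f -> (forall p, 0 < f p) -> loclip (fun p => (f p)^-1).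
Proof.
move=> hf fpos p0; have [r r0 [L L0 H]] := hf p0.
set c := f p0 / 2; have c0 : 0 < c by rewrite divr_gt0 ?fpos.
set r' := Num.min r (c / (L + 1)).
have L1 : 0 < L + 1 by rewrite ltr_wpDl.
have r'r p : cnorm (p - p0) < r' -> cnorm (p - p0) < r.
  by move/lt_le_trans; apply; rewrite ge_min lexx.
have lower p : cnorm (p - p0) < r' -> c <= f p.
  move=> hp; have hp0 : cnorm (p0 - p0) < r.
    by rewrite subrr cnorm0; apply: le_lt_trans (r'r _ hp); apply: cnorm_ge0.
  have := H p p0 (r'r _ hp) hp0.
  have : L * cnorm (p - p0) <= c.
    move: hp; rewrite lt_min => /andP[_]; rewrite ltr_pdivlMr // => hp.
    have := cnorm_ge0 (p - p0); nra.
  have := ler_norm (f p0 - f p); rewrite distrC /c; lra.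
exists r'; first by rewrite lt_min r0 divr_gt0.
exists (c ^- 2 * L); first by rewrite mulr_ge0 // invr_ge0 exprn_ge0 // ltW.
move=> p p' hp hp'.
apply: le_trans (lipschitz_invr c0 (lower p hp) (lower p' hp')) _.
rewrite -mulrA ler_wpM2l ?invr_ge0 ?exprn_ge0 ?(ltW c0) //.
exact: H (r'r _ hp) (r'r _ hp').
Qed.

Lemma loclip_expR f : loclip f -> loclip (fun p => expR (f p)).
Proof.
apply: (@loclip_comp (fun _ => True)) => // B _.
exists (expR B); first exact: ltW (expR_gt0 _).
by move=> x x' _ _ hx hx'; apply: lipschitz_expR.
Qed.

Lemma loclip_maxr f (c : R) : loclip f -> loclip (fun p => Num.max (f p) c).
Proof.
apply: (@loclip_comp (fun _ => True) (fun x => Num.max x c)) => // B _.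
by exists 1 => // x x' _ _ _ _; rewrite mul1r lipschitz_maxr.
Qed.

Lemma loclip_rep_gain f (ra e : R) : 0 <= ra -> 0 < e -> loclip f ->
  (forall p, 0 <= f p) -> loclip (fun p => rep_gain ra e (Num.min (f p) ra)).
Proof.
move=> ra0 e0 hf f0.
apply: (@loclip_comp (fun x => 0 <= x) (fun x => rep_gain ra e (Num.min x ra))) => // B _.
exists (`|ra + e| * e ^- 2); first by rewrite mulr_ge0 // invr_ge0 exprn_ge0 // ltW.
move=> x x' x0 x'0 _ _; apply: le_trans (lipschitz_rep_gain ra e0 _ _) _;
  rewrite ?le_min ?x0 ?x'0 //.
by rewrite ler_wpM2l ?mulr_ge0 ?invr_ge0 ?exprn_ge0 ?(ltW e0) // lipschitz_minr.
Qed.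

Lemma loclip_sqr_over_max f g : loclip f -> loclip g -> (forall p, 0 <= f p) ->
  loclip (fun p => sqr_over_max (f p) (g p)).
Proof.
move=> hf hg f0; apply: (@loclip_comp2 (fun x => 0 <= x) _ _ _ _ f0 hf hg) => B _.
by exists 2 => // x y x' y' x0 x'0 _ _ _ _; apply: lipschitz_sqr_over_max.
Qed.

Definition loclipv (u : M -> 'rV[R]_d) := forall j, loclip (fun p => u p 0 j).

Lemma loclip_uniform (I : eqType) (s : seq I) (F : I -> M -> R) :
  (forall k, loclip (F k)) -> forall p0 : M,
  exists2 r : R, 0 < r & exists2 L : R, 0 <= L &
  forall k p p', k \in s -> cnorm (p - p0) < r -> cnorm (p' - p0) < r ->
    `|F k p - F k p'| <= L * cnorm (p - p').
Proof.
move=> hF p0; elim: s => [|a s [r r0 [L L0 H]]].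
  by exists 1 => //; exists 0 => // k p p'; rewrite in_nil.
have [ra ra0 [La La0 Ha]] := hF a p0.
exists (Num.min r ra); first by rewrite lt_min r0 ra0.
exists (L + La); first by rewrite addr_ge0.
move=> k p p'; rewrite inE !lt_min => /orP[/eqP->|ks] /andP[h1 h2] /andP[h3 h4].
  by apply: le_trans (Ha _ _ h2 h4) _; rewrite ler_wpM2r ?cnorm_ge0 // lerDr.
by apply: le_trans (H _ _ _ ks h1 h3) _; rewrite ler_wpM2r ?cnorm_ge0 // lerDl.
Qed.

Lemma loclipv_lipschitz (u : M -> 'rV[R]_d) : loclipv u -> forall p0 : M,
  exists2 r : R, 0 < r & exists2 L : R, 0 <= L &
  forall p p', cnorm (p - p0) < r -> cnorm (p' - p0) < r ->
    vnorm (u p - u p') <= L * cnorm (p - p').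
Proof.
move=> hu p0; have [r r0 [L L0 H]] := loclip_uniform (index_enum 'I_d) hu p0.
exists r => //; exists (d%:R * L); first by rewrite mulr_ge0.
move=> p p' hp hp'; apply: le_trans (vnorm_le_sum_abs _) _.
apply: le_trans (_ : \sum_(j < d) L * cnorm (p - p') <= _).
  by apply: ler_sum => j _; rewrite !mxE; apply: H; rewrite ?mem_index_enum.
by rewrite sumr_const card_ord -mulrA mulr_natl.
Qed.

Lemma loclipv_locally_lipschitz (u : M -> 'rV[R]_d) : loclipv u -> locally_lipschitz u.
Proof.
move=> hu p0; have [r r0 [L _ H]] := loclipv_lipschitz hu p0.
by exists r; split=> //; exists L.
Qed.

Lemma loclip_vnorm (u : M -> 'rV[R]_d) : loclipv u -> loclip (fun p => vnorm (u p)).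
Proof.
move=> hu p0; have [r r0 [L L0 H]] := loclipv_lipschitz hu p0.
exists r => //; exists L => // p p' hp hp'.
exact: le_trans (ler_dist_vnorm _ _) (H _ _ hp hp').
Qed.

Lemma loclipv_eq (u w : M -> 'rV[R]_d) : u =1 w -> loclipv u -> loclipv w.
Proof. by move=> uw hu j; apply: loclip_eq (hu j) => p; rewrite uw. Qed.

Lemma loclipv_cst (w : 'rV[R]_d) : loclipv (fun _ => w).
Proof. by move=> j; apply: loclip_cst. Qed.

Lemma loclipv_row i : loclipv (fun p => pos p i).
Proof. by move=> j; apply: loclip_eq (loclip_entry i j) => p; rewrite mxE. Qed.

Lemma loclipvB (u w : M -> 'rV[R]_d) : loclipv u -> loclipv w -> loclipv (fun p => u p - w p).
Proof.
move=> hu hw j; apply: loclip_eq (loclipD (hu j) (loclipN (hw j))) => p.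
by rewrite !mxE.
Qed.

Lemma loclipvZ (a : M -> R) (u : M -> 'rV[R]_d) :
  loclip a -> loclipv u -> loclipv (fun p => a p *: u p).
Proof. by move=> ha hu j; apply: loclip_eq (loclipM ha (hu j)) => p; rewrite mxE. Qed.

Lemma loclipv_sum (I : Type) (s : seq I) (P : pred I) (U : I -> M -> 'rV[R]_d) :
  (forall k, loclipv (U k)) -> loclipv (fun p => \sum_(k <- s | P k) U k p).
Proof.
move=> hU j; apply: loclip_eq (loclip_sum s P (fun k => hU k j)) => p.
by rewrite summxE.
Qed.

Lemma loclip_vdot (u w : M -> 'rV[R]_d) :
  loclipv u -> loclipv w -> loclip (fun p => vdot (u p) (w p)).
Proof. by move=> hu hw; apply: loclip_sum => j; apply: loclipM. Qed.

Lemma loclip_kappa2 (eps : R) (u w : M -> 'rV[R]_d) : 0 < eps -> eps < 1 ->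
  loclipv u -> loclipv w -> loclip (fun p => kappa2 eps (u p) (w p)).
Proof.
move=> e0 e1 hu hw; apply: loclip_eq (fun p => esym (kappa2E (u p) (w p) e0 e1)) _.
have huu := loclip_vdot hu hu; have c0 : 0 < 1 - eps by rewrite subr_gt0.
apply: loclipM.
  apply: loclip_sqr_over_max (loclipM (loclip_cst _) huu) (loclipN (loclip_vdot hu hw)) _.
  by move=> p; rewrite mulr_ge0 ?vdot_ge0 // ltW.
apply: loclipV (loclipM (loclip_cst _) (loclip_maxr _ huu)) _ => p.
by rewrite mulr_gt0 // lt_max e0 orbT.
Qed.

End LocallyLipschitz.

Section Commands.
Variables (R : realType) (n d m : nat) (q : 'I_m -> 'rV[R]_d).
Variables (beta sigma1 sigma2 eps ravoid : R).
Local Notation M := 'M[R]_(n, d).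

Lemma loclip_gauss k l :
  loclip (fun p : M => expR (- beta * vnorm (q k - pos p l) ^+ 2)).
Proof.
apply/loclip_expR/loclipM; first exact: loclip_cst.
by apply/loclipX/loclip_vnorm/loclipvB; [apply: loclipv_cst | apply: loclipv_row].
Qed.

Lemma mass_gt0 (l : 'I_n) (p : M) k : 0 < mass beta q p k.
Proof.
have n0 : (0 < n)%N by case: n l => [[]|].
rewrite mulr_gt0 ?invr_gt0 ?ltr0n // (bigD1 l) //= ltr_pwDl ?expR_gt0 //.
by rewrite sumr_ge0 // => l' _; rewrite ltW ?expR_gt0.
Qed.

Lemma loclip_mass k : loclip (fun p : M => mass beta q p k).
Proof. by apply: loclipM (loclip_cst _) _; apply: loclip_sum => l; apply: loclip_gauss. Qed.

Lemma loclip_ms_weight i k : loclip (fun p : M =>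
  (mass beta q p k)^-1 * expR (- beta * vnorm (q k - pos p i) ^+ 2)).
Proof.
apply: loclipM (loclip_gauss k i).
exact: loclipV (loclip_mass k) (fun p => mass_gt0 i p k).
Qed.

Lemma loclipv_v_ms i : (0 < m)%N -> loclipv (fun p : M => v_ms beta sigma1 q p i).
Proof.
move=> m0; apply: loclipvZ; last apply: loclipvZ (loclip_cst _) _.
  apply: loclipV (loclip_sum _ _ (loclip_ms_weight i)) _ => p.
  rewrite (bigD1 (Ordinal m0)) //= ltr_pwDl ?mulr_gt0 ?invr_gt0 ?mass_gt0 ?expR_gt0 //.
  by rewrite sumr_ge0 // => k _; rewrite ltW ?mulr_gt0 ?invr_gt0 ?mass_gt0 ?expR_gt0.
apply: loclipv_sum => k; apply: loclipvZ (loclip_ms_weight i k) _.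
by apply: loclipvB; [apply: loclipv_cst | apply: loclipv_row].
Qed.

Lemma v_repE (p : M) i : v_rep sigma2 eps ravoid p i = sigma2 *: \sum_(j < n | j != i)
  rep_gain ravoid eps (Num.min (vnorm (pos p i - pos p j)) ravoid) *: (pos p i - pos p j).
Proof.
rewrite /v_rep big_mkcondr; congr (_ *: _); apply: eq_bigr => j _.
by case: leP => _ //; rewrite /rep_gain subrr mul0r scale0r.
Qed.

Lemma loclipv_v_rep i : 0 < eps -> 0 <= ravoid ->
  loclipv (fun p : M => v_rep sigma2 eps ravoid p i).
Proof.
move=> e0 ra0; apply: loclipv_eq (fun p => esym (v_repE p i)) _.
apply: loclipvZ (loclip_cst _) _; apply: loclipv_sum => j.
have hd : loclipv (fun p : M => pos p i - pos p j) by apply: loclipvB; apply: loclipv_row.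
apply: loclipvZ (loclip_rep_gain ra0 e0 (loclip_vnorm hd) _) hd => p.
exact: vnorm_ge0.
Qed.

End Commands.

Theorem lemma6 (R : realType) (n d m : nat) (q : 'I_m -> 'rV[R]_d)
  (beta sigma1 sigma2 eps ravoid : R) :
  (2 <= n)%N -> (0 < m)%N ->
  0 < beta -> 0 < sigma1 -> 0 < sigma2 -> 0 < eps -> eps < 1 -> 0 < ravoid ->
  forall i : 'I_n,
    locally_lipschitz (fun p : 'M[R]_(n, d) =>
      v_cv beta sigma1 sigma2 eps ravoid q p i).
Proof.
move=> _ m0 _ _ _ e0 e1 ra0 i; apply: loclipv_locally_lipschitz.
have hrep := loclipv_v_rep (d := d) sigma2 i e0 (ltW ra0).
have hms := loclipv_v_ms q beta sigma1 i m0.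
exact: loclipvZ (loclip_kappa2 e0 e1 hms hrep) hrep.
Qed.
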